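(* Let $f:\mathbf{R}^d\times A\to\mathbf{R}^d$ be bounded with $\|f(x,a)\|\le M$ for all states $x$ and actions $a\in A$, Lipschitz continuous in the state, $\|f(x,a)-f(x',a)\|\le L\|x-x'\|$, and approximately odd in the action: $f(x,-a)=-f(x,a)+\epsilon(x,a)$ with $\|\epsilon(x,a)\|\le E$ for all $x,a$. Let $\nu>0$, $T\in\mathbf{N}$, and let $x_T(0),\dots,x_T(2T)$ be generated by Euler's method $x_T(k+1)=x_T(k)+\nu f(x_T(k),a_T(k))$ with actions $a_T(0),\dots,a_T(2T-1)\in A$ satisfying $a_T(T+k)=-a_T(T-1-k)$ for $k=0,\dots,T-1$. Then $$\|x_T(0)-x_T(2T)\|\le\left(\nu M+\frac{E}{L}\right)\left[e^{TL\nu}-1\right].$$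
   Context: This models discretized teleoperation with a learned action map $f$: $x_T(k)\in\mathbf{R}^d$ is the robot state at step $k$, $a_T(k)$ the user's action (from a bounded action set $A$ closed under negation), and $\nu>0$ the update rate; $\epsilon$ is the residual error by which the map fails to be exactly odd in the action. *)

From mathcomp Require Import all_boot all_order all_algebra.
From mathcomp Require Import all_classical all_reals all_analysis.
Set Implicit Arguments. Unset Strict Implicit. Unset Printing Implicit Defensive.
Import Order.TTheory GRing.Theory Num.Theory.
Local Open Scope ring_scope.

Definition enorm (R : realType) (d : nat) (v : 'rV[R]_d) : R :=
  Num.sqrt (\sum_(i < d) v ord0 i ^+ 2).

(** The second half of the trajectory approximately retraces the first one
backwards: by the approximate oddness of [f], the Euler step from [x (T + k)]
with action [- a (T - 1 - k)] nearly undoes the step from [x (T - 1 - k)] to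
[x (T - k)].  Hence the gap [e k = |x (T + k) - x (T - k)|] satisfies, by the
Lipschitz bound, [e (k + 1) <= (1 + nu L) e k + nu (nu M L + E)], and the
discrete Grönwall inequality together with [(1 + nu L) ^ T <= exp (T nu L)]
bounds [e T = |x (2 T) - x 0|]. *)
From mathcomp Require Import all_boot all_order all_algebra.
From mathcomp Require Import all_classical all_reals all_analysis.
From mathcomp Require Import ring lra zify.
Import Order.TTheory GRing.Theory Num.Theory.
Set Implicit Arguments. Unset Strict Implicit. Unset Printing Implicit Defensive.
Local Open Scope ring_scope.

Lemma lagrange_identity (R : comPzRingType) (I : finType) (u v : I -> R) :
  \sum_i \sum_j (u i * v j - u j * v i) ^+ 2 =
  2 * ((\sum_i u i ^+ 2) * (\sum_i v i ^+ 2) - (\sum_i u i * v i) ^+ 2).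
Proof.
have sumM (a b : I -> R) : (\sum_i a i) * (\sum_j b j) = \sum_i \sum_j a i * b j.
  by rewrite mulr_suml; apply: eq_bigr => i _; rewrite mulr_sumr.
transitivity (\sum_i \sum_j (u i ^+ 2 * v j ^+ 2 + u j ^+ 2 * v i ^+ 2
   - 2 * (u i * v i * (u j * v j)))).
  by apply: eq_bigr => i _; apply: eq_bigr => j _; ring.
under eq_bigr do rewrite sumrB big_split /=.
rewrite sumrB big_split /= [X in _ + X - _]exchange_big /=.
rewrite [(\sum_i u i * v i) ^+ 2]expr2 !sumM mulrBr mulrDl mul1r.
congr (_ + _ - _); rewrite mulr_sumr; apply: eq_bigr => i _;
  rewrite ?mulr_sumr; apply: eq_bigr => j _; ring.
Qed.

Lemma cauchy_schwarz_sum (R : realDomainType) (I : finType) (u v : I -> R) :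
  (\sum_i u i * v i) ^+ 2 <= (\sum_i u i ^+ 2) * (\sum_i v i ^+ 2).
Proof.
have : 0 <= \sum_i \sum_j (u i * v j - u j * v i) ^+ 2.
  by apply: sumr_ge0 => i _; apply: sumr_ge0 => j _; apply: sqr_ge0.
rewrite lagrange_identity; lra.
Qed.

Section EuclideanNorm.
Variables (R : realType) (d : nat).
Implicit Types u v : 'rV[R]_d.

Lemma enorm_ge0 v : 0 <= enorm v.
Proof. exact: sqrtr_ge0. Qed.

Lemma enormD u v : enorm (u + v) <= enorm u + enorm v.
Proof.
rewrite /enorm.
set a := \sum_i u ord0 i ^+ 2; set b := \sum_i v ord0 i ^+ 2.
have a0 : 0 <= a by apply: sumr_ge0 => i _; apply: sqr_ge0.
have b0 : 0 <= b by apply: sumr_ge0 => i _; apply: sqr_ge0.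
have -> : \sum_i (u + v) ord0 i ^+ 2 = a + b + 2 * \sum_i u ord0 i * v ord0 i.
  rewrite /a /b -big_split mulr_sumr -big_split /=; apply: eq_bigr => i _.
  by rewrite !mxE; ring.
have dot_le : \sum_i u ord0 i * v ord0 i <= Num.sqrt a * Num.sqrt b.
  rewrite -sqrtrM // (le_trans (ler_norm _)) // -sqrtr_sqr.
  exact/ler_wsqrtr/cauchy_schwarz_sum.
rewrite -[X in _ <= X]ger0_norm ?addr_ge0 ?sqrtr_ge0 // -sqrtr_sqr.
by apply: ler_wsqrtr; rewrite sqrrD !sqr_sqrtr //; lra.
Qed.

Lemma enormZ (c : R) v : enorm (c *: v) = `|c| * enorm v.
Proof.
rewrite /enorm.
have -> : \sum_i (c *: v) ord0 i ^+ 2 = c ^+ 2 * \sum_i v ord0 i ^+ 2.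
  by rewrite mulr_sumr; apply: eq_bigr => i _; rewrite !mxE exprMn.
by rewrite sqrtrM ?sqr_ge0 // sqrtr_sqr.
Qed.

Lemma enormN v : enorm (- v) = enorm v.
Proof. by rewrite -scaleN1r enormZ normrN normr1 mul1r. Qed.

Lemma enorm0 : enorm (0 : 'rV[R]_d) = 0.
Proof. by rewrite -(scale0r (0 : 'rV[R]_d)) enormZ normr0 mul0r. Qed.

Lemma enormB u v : enorm (u - v) = enorm (v - u).
Proof. by rewrite -enormN opprB. Qed.

End EuclideanNorm.

Lemma discrete_gronwall (R : realDomainType) (e : nat -> R) (h K : R) (n : nat) :
  0 <= h -> e 0%N <= 0 ->
  (forall k, (k < n)%N -> e k.+1 <= (1 + h) * e k + h * K) ->
  e n <= K * ((1 + h) ^+ n - 1).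
Proof.
move=> h0 e0; elim: n => [|n IH] step; first by rewrite expr0 subrr mulr0.
have IHn : e n <= K * ((1 + h) ^+ n - 1) by apply: IH => k /ltnW/step.
have := ler_wpM2l (addr_ge0 ler01 h0) IHn.
have := step n (ltnSn n).
rewrite exprS; move: ((1 + h) ^+ n) => q; nra.
Qed.

Lemma exp1Dx_le_expR (R : realType) (h : R) (n : nat) :
  0 <= 1 + h -> (1 + h) ^+ n <= expR (n%:R * h).
Proof.
move=> h1; rewrite expRM_natl; apply: lerXn2r => //.
- by rewrite qualifE /= expR_ge0.
- exact: expR_ge1Dx.
Qed.

Section ReflectedEuler.
Variables (R : realType) (d m : nat) (A : 'rV[R]_m -> Prop).
Variables (f eps : 'rV[R]_d -> 'rV[R]_m -> 'rV[R]_d) (M L E nu : R).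
Hypothesis f_bounded : forall y u, A u -> enorm (f y u) <= M.
Hypothesis L_gt0 : 0 < L.
Hypothesis f_lipschitz :
  forall y y' u, A u -> enorm (f y u - f y' u) <= L * enorm (y - y').
Hypothesis f_odd : forall y u, A u -> f y (- u) = - f y u + eps y u.
Hypothesis eps_bounded : forall y u, A u -> enorm (eps y u) <= E.
Hypothesis nu_gt0 : 0 < nu.

Lemma reflected_euler_step u (p z : 'rV[R]_d) : A u ->
  enorm (p + nu *: f p (- u) - z) <=
  (1 + nu * L) * enorm (p - (z + nu *: f z u)) + nu * (nu * M * L + E).
Proof.
move=> Au; rewrite f_odd //.
set z1 := z + nu *: f z u; set e := enorm (p - z1).
have -> : p + nu *: (- f p u + eps p u) - z =
    (p - z1) + nu *: (f z u - f p u) + nu *: eps p u.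
  by apply/matrixP => i j; rewrite !mxE; ring.
have z_near : enorm (z - p) <= nu * M + e.
  have -> : z - p = (z - z1) + (z1 - p) by rewrite addrA subrK.
  apply: le_trans (enormD _ _) _; rewrite [enorm (z1 - p)]enormB lerD2r.
  rewrite /z1 opprD addrA subrr add0r enormN enormZ gtr0_norm //.
  by rewrite ler_pM2l // f_bounded.
have f_near : enorm (f z u - f p u) <= L * (nu * M + e).
  by rewrite (le_trans (f_lipschitz _ _ Au)) // ler_pM2l.
have eps_le := eps_bounded p Au.
apply: le_trans (enormD _ _) _; apply: le_trans (lerD (enormD _ _) (lexx _)) _.
rewrite !enormZ gtr0_norm //.
have := ler_wpM2l (ltW nu_gt0) f_near; have := ler_wpM2l (ltW nu_gt0) eps_le.
rewrite -/e; lra.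
Qed.

Lemma reflected_euler_gap (T : nat) (x : nat -> 'rV[R]_d) (a : nat -> 'rV[R]_m) :
  (forall k, (k < 2 * T)%N -> A (a k)) ->
  (forall k, (k < 2 * T)%N -> x k.+1 = x k + nu *: f (x k) (a k)) ->
  (forall k, (k < T)%N -> a (T + k)%N = - a (T - 1 - k)%N) ->
  forall k, (k <= T)%N ->
  enorm (x (T + k)%N - x (T - k)%N) <= (nu * M + E / L) * ((1 + nu * L) ^+ k - 1).
Proof.
move=> Aa euler reflect k kT.
apply: (discrete_gronwall (e := fun k => enorm (x (T + k)%N - x (T - k)%N)))
  => [||i ik /=]; first exact: mulr_ge0 (ltW nu_gt0) (ltW L_gt0).
  by rewrite addn0 subn0 subrr enorm0.
have {ik} iT : (i < T)%N by lia.
have -> : nu * L * (nu * M + E / L) = nu * (nu * M * L + E).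
  by field; rewrite gt_eqF.
have -> : (T - i = (T - i.+1).+1)%N by lia.
rewrite addnS (euler (T + i)%N) ?reflect ?(euler (T - i.+1)%N); try lia.
have -> : (T - 1 - i = T - i.+1)%N by lia.
by apply: reflected_euler_step; apply: Aa; lia.
Qed.

End ReflectedEuler.

Theorem corollary1 (R : realType) (d m : nat)
  (A : 'rV[R]_m -> Prop) (f : 'rV[R]_d -> 'rV[R]_m -> 'rV[R]_d)
  (eps : 'rV[R]_d -> 'rV[R]_m -> 'rV[R]_d) (M L E nu : R) (T : nat)
  (x : nat -> 'rV[R]_d) (a : nat -> 'rV[R]_m) :
  (* action set: bounded and closed under negation *)
  (exists B : R, forall u, A u -> enorm u <= B) ->
  (forall u, A u -> A (- u)) ->
  (* f bounded, Lipschitz in the state, approximately odd in the action *)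
  (forall y u, A u -> enorm (f y u) <= M) ->
  0 < L ->
  (forall y y' u, A u -> enorm (f y u - f y' u) <= L * enorm (y - y')) ->
  (forall y u, A u -> f y (- u) = - f y u + eps y u) ->
  (forall y u, A u -> enorm (eps y u) <= E) ->
  0 < nu ->
  (* actions and Euler scheme *)
  (forall k, (k < 2 * T)%N -> A (a k)) ->
  (forall k, (k < 2 * T)%N -> x k.+1 = x k + nu *: f (x k) (a k)) ->
  (forall k, (k < T)%N -> a (T + k)%N = - a (T - 1 - k)%N) ->
  enorm (x 0%N - x (2 * T)%N) <= (nu * M + E / L) * (expR (T%:R * L * nu) - 1).
Proof.
move=> _ _ fM L0 fL f_odd epsE nu0 Aa euler reflect.
case: (posnP T) => [->|T0].
  by rewrite muln0 subrr enorm0 mul0r mul0r expR0 subrr mulr0.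
have A0 : A (a 0%N) by apply: Aa; lia.
have M0 : 0 <= M := le_trans (enorm_ge0 _) (fM (x 0%N) _ A0).
have E0 : 0 <= E := le_trans (enorm_ge0 _) (epsE (x 0%N) _ A0).
have K0 : 0 <= nu * M + E / L.
  by apply: addr_ge0; [apply: mulr_ge0 | apply: divr_ge0] => //; exact: ltW.
have := reflected_euler_gap fM L0 fL f_odd epsE nu0 Aa euler reflect (leqnn T).
rewrite subnn addnn -mul2n enormB => gap; apply: le_trans gap _.
apply: (ler_wpM2l K0); rewrite lerD2r -mulrA (mulrC L).
by apply: exp1Dx_le_expR; apply: addr_ge0 => //; apply: mulr_ge0; apply: ltW.
Qed.
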